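(* Let $P\in\Delta_{\mathcal{T},\mathcal{X},\mathcal{Y}}$. If the set of minimizers of $Q\mapsto I_Q(T:X\mid Y)$ over $\Delta_P$ contains more than one element, then there exists a minimizer lying on the relative boundary of $\Delta_P$.
   Context: $T,X,Y$ are random variables with finite state spaces $\mathcal{T},\mathcal{X},\mathcal{Y}$; $\Delta_{\mathcal{T},\mathcal{X},\mathcal{Y}}$ is the set of all joint distributions on $\mathcal{T}\times\mathcal{X}\times\mathcal{Y}$. For $P\in\Delta_{\mathcal{T},\mathcal{X},\mathcal{Y}}$, $\Delta_P=\{Q\in\Delta_{\mathcal{T},\mathcal{X},\mathcal{Y}}: Q(X=x,T=t)=P(X=x,T=t),\ Q(Y=y,T=t)=P(Y=y,T=t)\ \forall x,y,t\}$, a polytope. $I_Q(T:X\mid Y)$ is the conditional mutual information computed under $Q$. On $\Delta_P$, minimizing $I_Q(T:X\mid Y)$ is equivalent to maximizing the conditional entropy $H_Q(T\mid X,Y)$. *)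

From mathcomp Require Import all_boot.
From Stdlib Require Import Reals.

Set Implicit Arguments.
Unset Strict Implicit.
Unset Printing Implicit Defensive.

Local Open Scope R_scope.

Definition rsum (I : finType) (f : I -> R) : R := \big[Rplus/0]_(i : I) f i.

Definition jdist (T X Y : finType) := T -> X -> Y -> R.

Section Defs.
Variables T X Y : finType.

Definition is_dist (Q : jdist T X Y) : Prop :=
  (forall t x y, 0 <= Q t x y) /\
  rsum (fun t => rsum (fun x => rsum (fun y => Q t x y))) = 1.

Definition margTX (Q : jdist T X Y) (t : T) (x : X) : R := rsum (fun y => Q t x y).
Definition margTY (Q : jdist T X Y) (t : T) (y : Y) : R := rsum (fun x => Q t x y).
Definition margXY (Q : jdist T X Y) (x : X) (y : Y) : R := rsum (fun t => Q t x y).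
Definition margY (Q : jdist T X Y) (y : Y) : R :=
  rsum (fun t => rsum (fun x => Q t x y)).

Definition DeltaP (P Q : jdist T X Y) : Prop :=
  is_dist Q /\
  (forall t x, margTX Q t x = margTX P t x) /\
  (forall t y, margTY Q t y = margTY P t y).

Definition cmi (Q : jdist T X Y) : R :=
  rsum (fun t => rsum (fun x => rsum (fun y =>
    if Req_EM_T (Q t x y) 0 then 0
    else Q t x y * ln (Q t x y * margY Q y / (margTY Q t y * margXY Q x y))))).

Definition is_minimizer (P Q : jdist T X Y) : Prop :=
  DeltaP P Q /\ forall Q', DeltaP P Q' -> cmi Q <= cmi Q'.

Definition in_aff_DeltaP (P Q : jdist T X Y) : Prop :=
  exists (n : nat) (w : 'I_n -> R) (pts : 'I_n -> jdist T X Y),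
    (forall i, DeltaP P (pts i)) /\ rsum w = 1 /\
    (forall t x y, Q t x y = rsum (fun i => w i * pts i t x y)).

(** Relative interior of Delta_P (interior within its affine hull;
    topology of R^{T x X x Y} given by the sup-norm). *)
Definition in_relint_DeltaP (P Q : jdist T X Y) : Prop :=
  DeltaP P Q /\
  exists eps, 0 < eps /\
    forall Q', in_aff_DeltaP P Q' ->
      (forall t x y, Rabs (Q' t x y - Q t x y) < eps) -> DeltaP P Q'.

Definition in_closure_DeltaP (P Q : jdist T X Y) : Prop :=
  forall eps, 0 < eps -> exists Q', DeltaP P Q' /\
    forall t x y, Rabs (Q' t x y - Q t x y) < eps.

Definition in_relbd_DeltaP (P Q : jdist T X Y) : Prop :=
  in_closure_DeltaP P Q /\ ~ in_relint_DeltaP P Q.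

End Defs.

(** On [Delta_P] the [(T, Y)]- and [Y]-marginals are fixed, so [I_Q(T:X|Y)] is
    [sum_{t,x,y} kl (Q t x y) (Q x y)] plus a linear function of [Q], where the
    perspective [kl a A = a ln (a / A)] is jointly convex, strictly so off rays through
    the origin.  Hence two minimizers [Q1], [Q2] have proportional entries
    [Q1 t x y * Q2 x y = Q2 t x y * Q1 x y] (otherwise their midpoint would do strictly
    better), [kl] is affine along the line through them, and every point of this line
    lying in [Delta_P] is again a minimizer.  Walk along it from [Q1] in the direction
    of [Q2] until an entry first vanishes: going any further leaves [Delta_P] while
    staying in its affine hull, so the point reached is on the relative boundary. *)

From HB Require Import structures.
From mathcomp Require Import all_boot.
From Stdlib Require Import Reals Lra FunctionalExtensionality Classical.

Set Implicit Arguments.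
Unset Strict Implicit.
Unset Printing Implicit Defensive.

Local Open Scope R_scope.

HB.instance Definition _ := Monoid.isComLaw.Build R 0 Rplus
  (fun a b c => esym (Rplus_assoc a b c)) Rplus_comm Rplus_0_l.

Section FiniteSums.
Variable I : finType.
Implicit Types f g : I -> R.

Lemma eq_rsum f g : (forall i, f i = g i) -> rsum f = rsum g.
Proof. by move=> fg; apply: eq_bigr => i _. Qed.

Lemma rsum_lincomb a b f g :
  rsum (fun i => a * f i + b * g i) = a * rsum f + b * rsum g.
Proof.
apply: (big_ind3 (fun u v w => u = a * v + b * w)) => [|u1 u2 u3 v1 v2 v3 -> ->|i _];
  by [ring | ring | ].
Qed.

Lemma rsum_segment s f g :
  rsum (fun i => f i + s * (g i - f i)) = rsum f + s * (rsum g - rsum f).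
Proof.
rewrite (@eq_rsum _ (fun i => (1 - s) * f i + s * g i)) => [|i]; last by ring.
by rewrite rsum_lincomb; ring.
Qed.

Lemma rsum_ge0 f : (forall i, 0 <= f i) -> 0 <= rsum f.
Proof. by move=> f_ge0; apply: (big_ind (fun u => 0 <= u)) => // [|u v]; lra. Qed.

Lemma rsum_term_le f j : (forall i, 0 <= f i) -> f j <= rsum f.
Proof.
move=> f_ge0; rewrite /rsum (bigD1 j) //=.
have : 0 <= \big[Rplus/0]_(i | i != j) f i.
  by apply: (big_ind (fun u => 0 <= u)) => // [|u v]; lra.
lra.
Qed.

Lemma ex_minimizer (p : I -> Prop) f :
  (exists i, p i) -> exists i, p i /\ forall j, p j -> f i <= f j.
Proof.
have seq_min (s : seq I) : (forall j, j \in s -> ~ p j) \/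
    exists i, p i /\ forall j, j \in s -> p j -> f i <= f j.
  elim: s => [|a s [none_s | [k [pk kmin]]]]; first by left.
  - case: (classic (p a)) => pa; [right; exists a; split=> // j | left=> j];
      by rewrite in_cons => /orP [/eqP-> | /none_s] //; lra.
  - right; case: (classic (p a /\ f a < f k)) => [[pa ak] | not_ak].
      exists a; split=> // j; rewrite in_cons => /orP [/eqP-> | j_s pj]; first lra.
      by have := kmin j j_s pj; lra.
    exists k; split=> // j; rewrite in_cons => /orP [/eqP-> pj | /kmin //].
    by apply: Rnot_lt_le => ak; apply: not_ak.
move=> [i pi]; case: (seq_min (enum I)) => [/(_ i (mem_enum I i)) // | [k [pk kmin]]].
by exists k; split=> // j; apply: kmin; rewrite mem_enum.
Qed.

Lemma exit_point f d : (forall i, 0 <= f i) -> (exists i, d i < 0) ->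
  exists s i, (forall j, 0 <= f j + s * d j) /\ f i + s * d i = 0 /\ d i < 0.
Proof.
move=> f_ge0 /(ex_minimizer (fun i => f i / - d i)) [i [di_lt0 imin]].
exists (f i / - d i), i; split=> [j|]; last by split=> //; field; lra.
have s_ge0 : 0 <= f i / - d i.
  by apply: Rmult_le_pos; [apply: f_ge0 | apply: Rlt_le; apply: Rinv_0_lt_compat; lra].
case: (Rlt_le_dec (d j) 0) => [dj_lt0 | dj_ge0]; last by have := f_ge0 j; nra.
have := Rmult_le_compat_r (- d j) _ _ ltac:(lra) (imin j dj_lt0).
by rewrite (_ : f j / - d j * - d j = f j); [lra | field; lra].
Qed.

End FiniteSums.

Lemma ln_le_sub1 u : 0 < u -> ln u <= u - 1.
Proof. by move=> u_gt0; have := exp_ineq1_le (ln u); rewrite exp_ln //; lra. Qed.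

Lemma ln_eq_sub1 u : 0 < u -> ln u = u - 1 -> u = 1.
Proof.
move=> u_gt0 lnu; case: (Req_EM_T (ln u) 0) => [lnu0 | lnu_neq0].
  by rewrite -(exp_ln u u_gt0) lnu0 exp_0.
by have := exp_ineq1 _ lnu_neq0; rewrite exp_ln //; lra.
Qed.

Definition kl (a A : R) : R := if Req_EM_T a 0 then 0 else a * ln (a / A).

Lemma kl0 A : kl 0 A = 0.
Proof. by rewrite /kl; case: Req_EM_T. Qed.

Lemma klE a A : a <> 0 -> kl a A = a * ln (a / A).
Proof. by move=> a_neq0; rewrite /kl; case: Req_EM_T. Qed.

Lemma kl_ray k A : kl (k * A) A = k * A * ln k.
Proof.
case: (Req_EM_T (k * A) 0) => [-> | kA_neq0]; first by rewrite kl0; ring.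
have A_neq0 : A <> 0 by move=> A0; apply: kA_neq0; rewrite A0; ring.
by rewrite klE // (_ : k * A / A = k) //; field.
Qed.

(** The tangent-line (Gibbs) inequality [ln u <= u - 1] at [u = A r / a]. *)
Lemma kl_tangent a A r : 0 <= a <= A -> 0 < r ->
  a * ln r + a - A * r <= kl a A /\ (kl a A = a * ln r + a - A * r -> A * r = a).
Proof.
move=> [a_ge0 aA] r_gt0; case: (Req_EM_T a 0) => [a0 | a_neq0].
  rewrite a0 kl0; have : 0 <= A * r by apply: Rmult_le_pos; lra.
  by split; lra.
have a_gt0 : 0 < a by lra.
pose u := A * r / a.
have u_gt0 : 0 < u by apply: Rdiv_lt_0_compat => //; apply: Rmult_lt_0_compat; lra.
have ln_r : ln r = ln (a / A) + ln u.
  rewrite -ln_mult; [congr ln; rewrite /u; field | | ]; try lra.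
  by apply: Rdiv_lt_0_compat; lra.
have Au : A * r = a * u by rewrite /u; field; lra.
rewrite klE // ln_r Au; split.
  by have := ln_le_sub1 u_gt0; nra.
move=> eq_kl; have : ln u = u - 1 by apply: (Rmult_eq_reg_l a); lra.
by move/(ln_eq_sub1 u_gt0)->; ring.
Qed.

Lemma kl_midpoint a A b B : 0 <= a <= A -> 0 <= b <= B ->
  2 * kl ((a + b) / 2) ((A + B) / 2) <= kl a A + kl b B /\
  (2 * kl ((a + b) / 2) ((A + B) / 2) = kl a A + kl b B -> a * B = b * A).
Proof.
move=> aA bB; case: (Req_EM_T (a + b) 0) => [ab0 | ab_neq0].
  have [-> ->] : a = 0 /\ b = 0 by lra.
  by rewrite Rplus_0_r /Rdiv Rmult_0_l !kl0; split=> [|_]; [lra | ring].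
have AB_gt0 : 0 < A + B by lra.
pose r := (a + b) / (A + B).
have r_gt0 : 0 < r by apply: Rdiv_lt_0_compat; lra.
have mid : 2 * kl ((a + b) / 2) ((A + B) / 2) = (a + b) * ln r.
  rewrite klE; last lra.
  by rewrite (_ : (a + b) / 2 / ((A + B) / 2) = r); [field | rewrite /r; field; lra].
have Ar_sum : A * r + B * r = a + b by rewrite /r; field; lra.
have [ta eqa] := kl_tangent aA r_gt0.
have [tb eqb] := kl_tangent bB r_gt0.
rewrite mid; split; first lra.
move=> eq_sum; rewrite -(eqa ltac:(lra)) -(eqb ltac:(lra)); ring.
Qed.

Lemma kl_segment a A b B s : 0 <= a <= A -> 0 <= b <= B -> a * B = b * A ->
  kl (a + s * (b - a)) (A + s * (B - A)) = kl a A + s * (kl b B - kl a A).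
Proof.
move=> aA bB prop.
have [k [-> ->]] : exists k, a = k * A /\ b = k * B.
  case: (Req_EM_T A 0) => [A0 | A_neq0].
    exists (b / B); case: (Req_EM_T B 0) => [B0 | B_neq0]; last by split; [|field]; nra.
    by rewrite A0 B0; lra.
  by exists (a / A); split; [|apply: (Rmult_eq_reg_r A)]; [field | rewrite -prop; field |].
have -> : k * A + s * (k * B - k * A) = k * (A + s * (B - A)) by ring.
by rewrite !kl_ray; ring.
Qed.

Section Distributions.
Variables T X Y : finType.
Implicit Types (P Q : jdist T X Y) (F G : T -> X -> Y -> R).

Definition sum3 F : R := rsum (fun t => rsum (fun x => rsum (fun y => F t x y))).

Lemma eq_sum3 F G : (forall t x y, F t x y = G t x y) -> sum3 F = sum3 G.
Proof. by move=> FG; do 3![apply: eq_rsum => ?]; apply: FG. Qed.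

Lemma sum3_lincomb a b F G :
  sum3 (fun t x y => a * F t x y + b * G t x y) = a * sum3 F + b * sum3 G.
Proof.
by rewrite /sum3 -rsum_lincomb;
  do 2![apply: eq_rsum => ? /=; rewrite -rsum_lincomb].
Qed.

Lemma sum3Z a F : sum3 (fun t x y => a * F t x y) = a * sum3 F.
Proof.
by rewrite -[RHS]Rplus_0_r -(Rmult_0_l (sum3 F)) -sum3_lincomb;
  apply: eq_sum3 => *; ring.
Qed.

Lemma sum3D F G : sum3 (fun t x y => F t x y + G t x y) = sum3 F + sum3 G.
Proof.
by rewrite -[sum3 F]Rmult_1_l -[sum3 G]Rmult_1_l -sum3_lincomb;
  apply: eq_sum3 => *; ring.
Qed.

Lemma sum3_segment s F G :
  sum3 (fun t x y => F t x y + s * (G t x y - F t x y)) = sum3 F + s * (sum3 G - sum3 F).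
Proof.
rewrite (@eq_sum3 _ (fun t x y => (1 - s) * F t x y + s * G t x y)) => [|*]; last by ring.
by rewrite sum3_lincomb; ring.
Qed.

Lemma sum3_term_le F t x y : (forall t x y, 0 <= F t x y) -> F t x y <= sum3 F.
Proof.
move=> F_ge0; have ge0 t' x' : 0 <= rsum (fun y => F t' x' y) by apply: rsum_ge0.
apply: (Rle_trans _ (rsum (fun y => F t x y))); first exact: rsum_term_le.
apply: (Rle_trans _ (rsum (fun x => rsum (fun y => F t x y)))); first exact: rsum_term_le.
by apply: rsum_term_le => t'; apply: rsum_ge0.
Qed.

Lemma sum3_le_eq F G : (forall t x y, F t x y <= G t x y) -> sum3 G <= sum3 F ->
  forall t x y, F t x y = G t x y.
Proof.
move=> FG GF t x y; pose D t x y := 1 * G t x y + (-1) * F t x y.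
have D_ge0 t' x' y' : 0 <= D t' x' y' by rewrite /D; have := FG t' x' y'; lra.
by have := sum3_term_le t x y D_ge0; rewrite sum3_lincomb /D; have := FG t x y; lra.
Qed.

Lemma dist_neq_lt Q1 Q2 : is_dist Q1 -> is_dist Q2 -> Q1 <> Q2 ->
  exists t x y, Q2 t x y < Q1 t x y.
Proof.
move=> [_ sum1] [_ sum2] Q12; apply: NNPP => no_lt; apply: Q12.
have le12 t x y : Q1 t x y <= Q2 t x y.
  by apply: Rnot_lt_le => lt; apply: no_lt; exists t, x, y.
have sums : sum3 Q2 <= sum3 Q1 by rewrite /sum3 sum1 sum2; lra.
by do 3![apply: functional_extensionality => ?]; apply: sum3_le_eq.
Qed.

Definition line Q1 Q2 (s : R) : jdist T X Y :=
  fun t x y => Q1 t x y + s * (Q2 t x y - Q1 t x y).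

Lemma margXY_line Q1 Q2 s x y :
  margXY (line Q1 Q2 s) x y = margXY Q1 x y + s * (margXY Q2 x y - margXY Q1 x y).
Proof. exact: rsum_segment. Qed.

Lemma line_DeltaP P Q1 Q2 s : DeltaP P Q1 -> DeltaP P Q2 ->
  (forall t x y, 0 <= line Q1 Q2 s t x y) -> DeltaP P (line Q1 Q2 s).
Proof.
move=> [[_ sum1] [TX1 TY1]] [[_ sum2] [TX2 TY2]] line_ge0.
split; [split=> // | split=> [t x | t y]].
- change (sum3 Q1 = 1) in sum1; change (sum3 Q2 = 1) in sum2.
  change (sum3 (line Q1 Q2 s) = 1).
  by rewrite sum3_segment sum1 sum2; ring.
- by rewrite /margTX rsum_segment -!/(margTX _ t x) TX1 TX2; ring.
- by rewrite /margTY rsum_segment -!/(margTY _ t y) TY1 TY2; ring.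
Qed.

Lemma line_aff P Q1 Q2 s : DeltaP P Q1 -> DeltaP P Q2 ->
  in_aff_DeltaP P (line Q1 Q2 s).
Proof.
move=> D1 D2; exists 2%nat, (fun i : 'I_2 => if val i == 0%nat then 1 - s else s),
  (fun i : 'I_2 => if val i == 0%nat then Q1 else Q2).
split; first by move=> i; case: ifP.
by split=> [|t x y]; rewrite /rsum !big_ord_recl big_ord0 /= /line; ring.
Qed.

Lemma DeltaP_closure P Q : DeltaP P Q -> in_closure_DeltaP P Q.
Proof.
by move=> DQ eps eps_gt0; exists Q; split=> // t x y; rewrite Rminus_diag Rabs_R0.
Qed.

Lemma relint_line_zero P Q1 Q2 s t x y : DeltaP P Q1 -> DeltaP P Q2 ->
  in_relint_DeltaP P (line Q1 Q2 s) -> line Q1 Q2 s t x y = 0 ->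
  Q1 t x y <= Q2 t x y.
Proof.
move=> D1 D2 [_ [eps [eps_gt0 relint]]] zero.
pose K := sum3 (fun t x y => Rabs (Q2 t x y - Q1 t x y)).
have K_bound t' x' y' : Rabs (Q2 t' x' y' - Q1 t' x' y') <= K.
  by apply: (sum3_term_le t' x' y' (fun _ _ _ => Rabs_pos _)).
have K_ge0 : 0 <= K by apply: Rle_trans (K_bound t x y); apply: Rabs_pos.
(* A step [del] further along the line stays [eps]-close, hence in [Delta_P]. *)
pose del := eps / (K + 1).
have del_gt0 : 0 < del by apply: Rdiv_lt_0_compat; lra.
have shift t' x' y' : line Q1 Q2 (s + del) t' x' y' - line Q1 Q2 s t' x' y' =
                       del * (Q2 t' x' y' - Q1 t' x' y') by rewrite /line; ring.
have close t' x' y' : Rabs (line Q1 Q2 (s + del) t' x' y' - line Q1 Q2 s t' x' y') < eps.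
  rewrite shift Rabs_mult (Rabs_pos_eq del); last lra.
  have : del * (K + 1) = eps by rewrite /del; field; lra.
  by have := K_bound t' x' y'; nra.
have [[ge0 _] _] := relint _ (line_aff (s + del) D1 D2) close.
by have := ge0 t x y; have := shift t x y; rewrite zero; nra.
Qed.

End Distributions.

Section ConditionalMutualInformation.
Variables (T X Y : finType) (P : jdist T X Y).
Implicit Types Q : jdist T X Y.

Lemma DeltaP_le_margXY Q t x y : DeltaP P Q -> 0 <= Q t x y <= margXY Q x y.
Proof. by move=> [[Q_ge0 _] _]; split; [|apply: rsum_term_le => t']; apply: Q_ge0. Qed.

Definition cmi_linear_part (t : T) (y : Y) : R := ln (margY P y / margTY P t y).

Lemma cmi_DeltaP Q : DeltaP P Q ->
  cmi Q = sum3 (fun t x y => kl (Q t x y) (margXY Q x y) + cmi_linear_part t y * Q t x y).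
Proof.
move=> DQ; have [[Q_ge0 _] [_ TY]] := DQ.
apply: eq_sum3 => t x y; case: Req_EM_T => [Q0 | Q_neq0] /=; first by rewrite Q0 kl0; ring.
have Q_gt0 : 0 < Q t x y by have := Q_ge0 t x y; lra.
have XY_gt0 : 0 < margXY Q x y by have := DeltaP_le_margXY t x y DQ; lra.
have TY_gt0 : 0 < margTY Q t y.
  have : Q t x y <= margTY Q t y by apply: (@rsum_term_le _ (fun x' => Q t x' y)) => x'.
  lra.
have Y_eq : margY Q y = margY P y by apply: eq_rsum => t'; apply: TY.
have Y_ge : margTY Q t y <= margY P y.
  by rewrite -Y_eq; apply: (@rsum_term_le _ (fun t' => margTY Q t' y)) => t'; apply: rsum_ge0.
rewrite Y_eq klE // /cmi_linear_part -TY (Rmult_comm (ln _)) -Rmult_plus_distr_l -ln_mult.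
- by congr (_ * ln _); field; lra.
- by apply: Rdiv_lt_0_compat.
- by apply: Rdiv_lt_0_compat; lra.
Qed.

Lemma minimizers_proportional Q1 Q2 : is_minimizer P Q1 -> is_minimizer P Q2 ->
  forall t x y, Q1 t x y * margXY Q2 x y = Q2 t x y * margXY Q1 x y.
Proof.
move=> [D1 min1] [D2 min2] t x y.
have bnd1 t' x' y' := DeltaP_le_margXY t' x' y' D1.
have bnd2 t' x' y' := DeltaP_le_margXY t' x' y' D2.
pose M := line Q1 Q2 (/2).
have mid u v : u + / 2 * (v - u) = (u + v) / 2 by field.
have DM : DeltaP P M.
  apply: line_DeltaP => // t' x' y'; rewrite /M /line mid.
  by have := bnd1 t' x' y'; have := bnd2 t' x' y'; lra.
pose E Q t x y := kl (Q t x y) (margXY Q x y) + cmi_linear_part t y * Q t x y.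
have kl_mid t' x' y' : 2 * E M t' x' y' - (E Q1 t' x' y' + E Q2 t' x' y') =
    2 * kl ((Q1 t' x' y' + Q2 t' x' y') / 2) ((margXY Q1 x' y' + margXY Q2 x' y') / 2)
    - (kl (Q1 t' x' y') (margXY Q1 x' y') + kl (Q2 t' x' y') (margXY Q2 x' y')).
  by rewrite /E /M margXY_line /line !mid; field.
have convex t' x' y' : 2 * E M t' x' y' <= E Q1 t' x' y' + E Q2 t' x' y'.
  by have [le _] := kl_midpoint (bnd1 t' x' y') (bnd2 t' x' y'); have := kl_mid t' x' y'; lra.
have sums : sum3 (fun t x y => E Q1 t x y + E Q2 t x y) <= sum3 (fun t x y => 2 * E M t x y).
  rewrite sum3D sum3Z -!cmi_DeltaP //.
  by have := min1 _ D2; have := min2 _ D1; have := min1 _ DM; lra.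
have [_ eq_prop] := kl_midpoint (bnd1 t x y) (bnd2 t x y).
by apply: eq_prop; have := sum3_le_eq convex sums t x y; have := kl_mid t x y; lra.
Qed.

Lemma line_minimizer Q1 Q2 s : is_minimizer P Q1 -> is_minimizer P Q2 ->
  DeltaP P (line Q1 Q2 s) -> is_minimizer P (line Q1 Q2 s).
Proof.
move=> m1 m2 DL; have [D1 min1] := m1; have [D2 min2] := m2.
have e12 : cmi Q2 = cmi Q1 by have := min1 _ D2; have := min2 _ D1; lra.
split=> // Q DQ; apply: Rle_trans (min1 _ DQ); apply: Req_le.
transitivity (cmi Q1 + s * (cmi Q2 - cmi Q1)); last by rewrite e12; ring.
rewrite !cmi_DeltaP // -sum3_segment; apply: eq_sum3 => t x y.
rewrite margXY_line {1}/line kl_segment; first by rewrite /line; ring.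
- exact: DeltaP_le_margXY.
- exact: DeltaP_le_margXY.
- exact: minimizers_proportional.
Qed.

End ConditionalMutualInformation.

Theorem mainTheorem4 (T X Y : finType) (P : jdist T X Y) :
  is_dist P ->
  (exists Q1 Q2 : jdist T X Y,
      is_minimizer P Q1 /\ is_minimizer P Q2 /\ Q1 <> Q2) ->
  exists Q : jdist T X Y, is_minimizer P Q /\ in_relbd_DeltaP P Q.
Proof.
move=> _ [Q1 [Q2 [m1 [m2 Q12]]]].
have [[D1 _] [D2 _]] := (m1, m2).
have [t0 [x0 [y0 lt0]]] := dist_neq_lt D1.1 D2.1 Q12.
pose coord (Q : jdist T X Y) (i : T * X * Y) := Q i.1.1 i.1.2 i.2.
have [s [[[t x] y] [line_ge0 [zero dir]]]] :
    exists s i, (forall j, 0 <= coord Q1 j + s * (coord Q2 j - coord Q1 j)) /\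
      coord Q1 i + s * (coord Q2 i - coord Q1 i) = 0 /\ coord Q2 i - coord Q1 i < 0.
  apply: exit_point => [[[t x] y] | ]; first exact: (DeltaP_le_margXY t x y D1).1.
  by exists (t0, x0, y0); rewrite /coord /=; lra.
have DL : DeltaP P (line Q1 Q2 s).
  by apply: line_DeltaP => // t' x' y'; apply: (line_ge0 (t', x', y')).
exists (line Q1 Q2 s); split; first exact: line_minimizer.
split; first exact: DeltaP_closure.
move=> relint; have := relint_line_zero D1 D2 relint zero; rewrite /coord /= in dir *; lra.
Qed.
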